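(* Let $\bm\theta_{S,t}$ and $\bm\theta_{S^i,t}$ be the parameters at step $t$ of single-layer GCNN models trained with SGD on training sets $S$ and $S^i$, which differ only in the $i$-th sample ($\mathbf{z}_i=(\mathbf{x}_i,y_i)$ in $S$ versus $\mathbf{z}_i'=(\mathbf{x}_i',y_i')$ in $S^i$). Then $$\big|\nabla_{\bm\theta}\ell(f(\mathbf{x}_i,\bm\theta_{S,t}),y_i)-\nabla_{\bm\theta}\ell(f(\mathbf{x}_i',\bm\theta_{S^i,t}),y_i')\big|\le 2\,\nu_\ell\,\alpha_\sigma\,\mathbf{g}_\lambda.$$
   Context: $g(\mathbf{L})\in\mathbb{R}^{N\times N}$ is a graph filter on a graph with $N$ nodes; for a node $\mathbf{x}$, $e_{\cdot j}=[g(\mathbf{L})]_{\mathbf{x}j}$ and $\mathcal{N}(\mathbf{x})=\{j:[g(\mathbf{L})]_{\mathbf{x}j}\neq0\}$; each node $j$ has a scalar feature $\mathbf{x}_j$. The single-layer GCNN is $f(\mathbf{x},\bm\theta)=\sigma(\sum_{j\in\mathcal{N}(\mathbf{x})}e_{\cdot j}\mathbf{x}_j\bm\theta)$ with $\bm\theta\in\mathbb{R}$, and $\mathbf{g}_\lambda:=\sup_{\mathbf{x}}|\sum_{j\in\mathcal{N}(\mathbf{x})}e_{\cdot j}\mathbf{x}_j|$. SGD with learning rate $\eta$ from a common initialization: at step $t$ a common index $i_t$ is drawn uniformly from $\{1,\dots,m\}$ and each run updates $\bm\theta_{t+1}=\bm\theta_t-\eta\nabla_{\bm\theta}\ell(f(\mathbf{x}_{i_t},\bm\theta_t),y_{i_t})$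 using its own training set's $i_t$-th sample. Activation: $|\sigma'(u)|\le\alpha_\sigma$, $|\sigma'(u)-\sigma'(v)|\le\nu_\sigma|u-v|$. Loss: $|\ell(f,y)-\ell(f',y)|\le\alpha_\ell|f-f'|$ and $|\nabla_{\bm\theta}\ell(f(\cdot),y)-\nabla_{\bm\theta}\ell(f'(\cdot),y)|\le\nu_\ell|\nabla_{\bm\theta}f(\cdot)-\nabla_{\bm\theta}f'(\cdot)|$. *)

From HB Require Import structures.
From mathcomp Require Import all_boot all_order all_algebra.
From mathcomp Require Import all_classical all_reals all_analysis.
Set Implicit Arguments. Unset Strict Implicit. Unset Printing Implicit Defensive.
Import Order.TTheory GRing.Theory Num.Theory.
Local Open Scope ring_scope.

Section GCNN.
Variables (R : realType) (N : nat).

(* aggregated input at node v:  sum_{j in N(v)} [g(L)]_{vj} x_j *)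
Definition agg (gL : 'M[R]_N) (feat : 'I_N -> R) (v : 'I_N) : R :=
  \sum_(j < N | gL v j != 0) gL v j * feat j.

Definition gcnn (sigma : R -> R) (gL : 'M[R]_N) (feat : 'I_N -> R)
  (v : 'I_N) (th : R) : R := sigma (agg gL feat v * th).

Definition g_lambda (gL : 'M[R]_N) (feat : 'I_N -> R) : R :=
  \big[Num.max/0]_(v < N) `|agg gL feat v|.

Definition loss_grad (loss : R -> R -> R) (sigma : R -> R) (gL : 'M[R]_N)
  (feat : 'I_N -> R) (v : 'I_N) (y : R) (th : R) : R :=
  derive1 (fun t => loss (gcnn sigma gL feat v t) y) th.

(* SGD iterates on a training set S : 'I_m -> (node, label), index sequence idx *)
Fixpoint sgd (m : nat) (loss : R -> R -> R) (sigma : R -> R) (gL : 'M[R]_N)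
  (feat : 'I_N -> R) (eta th0 : R) (idx : nat -> 'I_m)
  (S : 'I_m -> 'I_N * R) (t : nat) : R :=
  match t with
  | 0 => th0
  | t'.+1 =>
      let th := sgd loss sigma gL feat eta th0 idx S t' in
      th - eta * loss_grad loss sigma gL feat (S (idx t')).1 (S (idx t')).2 th
  end.

End GCNN.

(* The bound is uniform in the parameter: at every [th], comparing [loss ∘ f]
   with [loss ∘ 0] in the gradient-Lipschitz hypothesis bounds the loss
   gradient by [nu_l |∂f/∂th|], and the chain rule gives
   [|∂f/∂th| = |sigma'(agg * th)| |agg| <= a_sigma g_lambda].  The triangle
   inequality then yields twice this bound, whatever the SGD iterates are; in
   particular neither the trajectories nor the way [S] and [Si] differ matter. *)
From HB Require Import structures.
From mathcomp Require Import all_boot all_order all_algebra.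
From mathcomp Require Import all_classical all_reals all_analysis.
Set Implicit Arguments. Unset Strict Implicit. Unset Printing Implicit Defensive.
Import Order.TTheory GRing.Theory Num.Theory.
Local Open Scope ring_scope.

Definition lipschitz_loss_grad (R : realType) (loss : R -> R -> R) (nu : R) : Prop :=
  forall (F F' : R -> R) (y th : R),
    derivable F th 1 -> derivable F' th 1 ->
    `|derive1 (fun t => loss (F t) y) th - derive1 (fun t => loss (F' t) y) th|
      <= nu * `|derive1 F th - derive1 F' th|.

Section LipschitzLossGrad.
Variables (R : realType) (loss : R -> R -> R) (nu : R).
Hypothesis loss_lip : lipschitz_loss_grad loss nu.

Lemma norm_derive1_loss_comp_le (F : R -> R) (y th : R) :
  derivable F th 1 ->
  `|derive1 (fun t => loss (F t) y) th| <= nu * `|derive1 F th|.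
Proof.
move=> dF; have := @loss_lip F (cst 0) y th dF (derivable_cst (0 : R) th 1).
have -> : (fun t => loss (cst 0 t) y) = cst (loss 0 y) by [].
by rewrite !derive1_cst !subr0.
Qed.

Lemma lipschitz_loss_grad_ge0 : 0 <= nu.
Proof.
have := @norm_derive1_loss_comp_le id 0 0 (@derivable_id _ _ _ _).
by rewrite derive1_id normr1 mulr1; apply: le_trans.
Qed.

End LipschitzLossGrad.

Lemma agg_le_g_lambda (R : realType) (N : nat) (gL : 'M[R]_N)
    (feat : 'I_N -> R) (v : 'I_N) :
  `|agg gL feat v| <= g_lambda gL feat.
Proof. exact: le_bigmax. Qed.

Section GCNNGradient.
Variables (R : realType) (N : nat) (gL : 'M[R]_N) (feat : 'I_N -> R).
Variables (sigma : R -> R) (a_sigma : R).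
Hypothesis sigma_derivable : forall u : R, derivable sigma u 1.
Hypothesis sigma'_le : forall u : R, `|derive1 sigma u| <= a_sigma.

Lemma is_derive_gcnn (v : 'I_N) (th : R) :
  is_derive th 1 (gcnn sigma gL feat v)
    (derive1 sigma (agg gL feat v * th) * agg gL feat v).
Proof.
set c := agg gL feat v.
have sigma_at : is_derive (c * th) 1 sigma (derive1 sigma (c * th)).
  by rewrite derive1E; apply: derivableP; exact: sigma_derivable.
have scale_at : is_derive th 1 ( *%R c) c by apply: is_derive_eq; exact: mulr1.
exact: is_derive1_comp.
Qed.

Lemma norm_derive1_gcnn_le (v : 'I_N) (th : R) :
  `|derive1 (gcnn sigma gL feat v) th| <= a_sigma * g_lambda gL feat.
Proof.
rewrite derive1E (@derive_val _ _ _ _ _ _ _ (is_derive_gcnn v th)) normrM.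
by apply: ler_pM => //; exact: agg_le_g_lambda.
Qed.

Lemma norm_loss_grad_le (loss : R -> R -> R) (nu : R) (v : 'I_N) (y th : R) :
  lipschitz_loss_grad loss nu ->
  `|loss_grad loss sigma gL feat v y th| <= nu * (a_sigma * g_lambda gL feat).
Proof.
move=> loss_lip.
have [dgcnn _] := is_derive_gcnn v th.
apply: le_trans (norm_derive1_loss_comp_le loss_lip y dgcnn) _.
apply: ler_wpM2l; first exact: lipschitz_loss_grad_ge0 loss_lip.
exact: norm_derive1_gcnn_le.
Qed.

End GCNNGradient.

Theorem lemma2 (R : realType) (N m : nat) (gL : 'M[R]_N) (feat : 'I_N -> R)
  (sigma : R -> R) (loss : R -> R -> R)
  (a_sigma nu_sigma a_l nu_l eta th0 : R) (idx : nat -> 'I_m)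
  (S Si : 'I_m -> 'I_N * R) (i : 'I_m) :
  (forall u : R, derivable sigma u 1) ->
  (forall u : R, `|derive1 sigma u| <= a_sigma) ->
  (forall u v : R, `|derive1 sigma u - derive1 sigma v| <= nu_sigma * `|u - v|) ->
  (forall y p : R, derivable (fun q => loss q y) p 1) ->
  (forall y p p' : R, `|loss p y - loss p' y| <= a_l * `|p - p'|) ->
  (forall (F F' : R -> R) (y th : R),
     derivable F th 1 -> derivable F' th 1 ->
     `|derive1 (fun t => loss (F t) y) th - derive1 (fun t => loss (F' t) y) th|
       <= nu_l * `|derive1 F th - derive1 F' th|) ->
  (forall k : 'I_m, k != i -> Si k = S k) ->
  forall t : nat,
  `|loss_grad loss sigma gL feat (S i).1 (S i).2
        (sgd loss sigma gL feat eta th0 idx S t)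
    - loss_grad loss sigma gL feat (Si i).1 (Si i).2
        (sgd loss sigma gL feat eta th0 idx Si t)|
  <= 2 * nu_l * a_sigma * g_lambda gL feat.
Proof.
move=> sigma_derivable sigma'_le _ _ _ loss_lip _ t.
apply: le_trans (ler_normB _ _) _.
rewrite -!mulrA mulr_natl mulr2n.
by apply: lerD; apply: norm_loss_grad_le.
Qed.
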